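(* Let $s\ge2$, let $(g_{\mu\nu})$ be a real symmetric invertible $(s+1)\times(s+1)$ matrix with inverse $(g^{\mu\nu})$, and let $\mathcal{A}=\bigoplus_n\mathcal{A}_n$ be the graded unital associative $\mathbb{C}$-algebra generated by $\nabla_0,\dots,\nabla_s$ in degree $1$ with relations $\sum_{\lambda,\mu}g^{\lambda\mu}[\nabla_\lambda,[\nabla_\mu,\nabla_\nu]]=0$ for $\nu=0,\dots,s$. Then $\mathcal{A}$ has exponential growth, i.e. $\dim\mathcal{A}_n$ grows exponentially in $n$. *)

(* Concrete model of the graded algebra A = T(V)/I where
   V = C^(s+1) with basis nabla_0..nabla_s, T(V) the free (tensor) algebra,
   and I the two-sided ideal generated by the cubic relations
     r_nu = sum_{lambda,mu} g^{lambda mu} [nabla_lambda,[nabla_mu,nabla_nu]].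
   T(V)_n is the space of functions on words of length n (coefficients
   w.r.t. the monomial basis), I_n is spanned by the elements
   u * r_nu * v with u, v monomials, |u| + 3 + |v| = n, and
   dim A_n = dim T(V)_n - dim I_n. *)
From HB Require Import structures.
From mathcomp Require Import all_boot all_order all_algebra.
From mathcomp Require Import reals.
From mathcomp.real_closed Require Import complex.
Set Implicit Arguments. Unset Strict Implicit. Unset Printing Implicit Defensive.
Import Order.TTheory GRing.Theory Num.Theory.
Local Open Scope ring_scope.

Section YM.
Variables (R : realType) (s : nat).
Local Notation C := (complex R).

Definition word (n : nat) := (n.-tuple 'I_s.+1).

Definition freeDeg (n : nat) := {ffun word n -> C^o}.

(* coefficient of the word t (a sequence of letters) in
   r_nu = sum_{lambda,mu} ginv lambda mu [nabla_lambda,[nabla_mu,nabla_nu]],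
   using [a,[b,c]] = abc - acb - bca + cba *)
Definition relcoef (ginv : 'M[R]_s.+1) (nu : 'I_s.+1) (t : seq 'I_s.+1) : C :=
  \sum_(lam < s.+1) \sum_(mu < s.+1) real_complex R (ginv lam mu) *
     ((t == [:: lam; mu; nu])%:R - (t == [:: lam; nu; mu])%:R
      - (t == [:: mu; nu; lam])%:R + (t == [:: nu; mu; lam])%:R).

(* the element u * r_nu * v of freeDeg n, where u = first i letters of c and
   v = last n - i - 3 letters of c *)
Definition idealGen (ginv : 'M[R]_s.+1) (n : nat) (nu : 'I_s.+1) (i : nat)
  (c : word n) : freeDeg n :=
  [ffun w : word n =>
     if (take i w == take i c) && (drop (i + 3) w == drop (i + 3) c)
     then relcoef ginv nu (take 3 (drop i w)) else 0].

Definition idealDeg (ginv : 'M[R]_s.+1) (n : nat) : {vspace freeDeg n} :=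
  (\sum_(nu < s.+1) \sum_(i < n.-2) \sum_(c : word n)
      <[idealGen ginv nu i c]>)%VS.

Definition dimA (ginv : 'M[R]_s.+1) (n : nat) : nat :=
  (\dim (fullv : {vspace freeDeg n}) - \dim (idealDeg ginv n))%N.

End YM.

From HB Require Import structures.
From mathcomp Require Import all_boot all_order all_algebra.
From mathcomp Require Import reals.
From mathcomp.real_closed Require Import complex.
From mathcomp Require Import zify.
Import Order.TTheory GRing.Theory Num.Theory.
Local Open Scope ring_scope.

(* Write T_n for the degree-n part of the free algebra, I_n for that of the
   ideal and a_n = dim A_n = (s+1)^n - dim I_n.  A generator u r_nu v of
   I_(n+3) either ends with a letter, and then lies in I_(n+2) nabla_a, or is
   u r_nu with |u| = n; splitting T_n = I_n (+) I_n^C and using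
   I_n r_nu <= sum_a I_(n+2) nabla_a gives
     I_(n+3) <= sum_a I_(n+2) nabla_a + sum_nu I_n^C r_nu,
   hence the Golod-Shafarevich type inequality
     a_(n+3) >= (s+1) (a_(n+2) - a_n).
   As s+1 >= 3 and a_n = (s+1)^n for n < 3, induction gives a_(n+1) >= 2 a_n,
   so a_n >= 2^n. *)

Section SeqCut.
Set Implicit Arguments. Unset Strict Implicit.
Variable T : Type.
Implicit Types x y : seq T.

Lemma drop_take_cat j k x : (j <= k)%N ->
  drop j x = drop j (take k x) ++ drop k x.
Proof.
move=> jk; rewrite -{1}(cat_take_drop (k - j) (drop j x)) take_drop drop_drop.
by rewrite subnK.
Qed.

Lemma drop_cat_leq j x y : (j <= size x)%N -> drop j (x ++ y) = drop j x ++ y.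
Proof.
move=> h; rewrite drop_cat; case: ltnP => // h2.
have -> : j = size x by apply/anti_leq; rewrite h h2.
by rewrite subnn drop0 drop_size.
Qed.

Lemma take_drop_take m i k x : (i + m <= k)%N ->
  take m (drop i (take k x)) = take m (drop i x).
Proof.
move=> h; rewrite -{1}(subnK (_ : i <= k)%N); last by lia.
by rewrite -take_drop take_takel //; lia.
Qed.

End SeqCut.

Section CubicRecurrence.
Variables (d : nat) (a : nat -> nat).
Hypotheses (d_ge3 : (3 <= d)%N) (a01 : (2 * a 0 <= a 1)%N)
  (a12 : (2 * a 1 <= a 2)%N)
  (a_rec : forall n, (d * a n.+2 <= a n.+3 + d * a n)%N).

Lemma cubic_rec_doubling n : (2 * a n <= a n.+1)%N /\ (2 * a n.+1 <= a n.+2)%N.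
Proof.
elim: n => [|n [h1 h2]]; first by split.
split=> //; have := a_rec n.
have h4 : (d * (4 * a n) <= d * a n.+2)%N by rewrite leq_mul2l; lia.
have h9 : (9 * a n.+2 <= 3 * (d * a n.+2))%N by rewrite mulnA leq_mul2r; lia.
lia.
Qed.

Lemma expn2_cubic_rec n : (2 ^ n * a 0 <= a n)%N.
Proof.
elim: n => [|n IH]; first by rewrite mul1n.
rewrite expnS -mulnA; apply: leq_trans (cubic_rec_doubling n).1.
by rewrite leq_mul2l IH orbT.
Qed.

End CubicRecurrence.

Lemma dimv_sum_limg_leq (K : fieldType) (aT rT : vectType K) (I : finType)
    (f : I -> 'Hom(aT, rT)) (U : {vspace aT}) :
  (\dim (\sum_(i : I) (f i @: U)) <= #|I| * \dim U)%N.
Proof.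
apply: leq_trans (dimv_leq_sum _ _ _) _.
rewrite -sum_nat_const; apply: leq_sum => i _.
by rewrite -(limg_ker_dim (f i) U) leq_addl.
Qed.

Section IdealRecurrence.
Set Implicit Arguments. Unset Strict Implicit.
Variables (R : realType) (s : nat) (ginv : 'M[R]_s.+1).
Local Notation C := (complex R).
Local Notation letter := 'I_s.+1.
Local Notation F n := (freeDeg R s n).
Local Notation W n := (word s n).
Local Notation gen := (idealGen ginv).
Local Notation I n := (idealDeg ginv n).
Local Notation rel := (relcoef ginv).

Definition coef n (f : F n) (x : seq letter) : C :=
  if insub x is Some w then f w else 0.

Lemma coef_word n (f : F n) (w : W n) : coef f w = f w.
Proof. by rewrite /coef valK. Qed.

Lemma coefZD n (k : C) (f g : F n) x :
  coef (k *: f + g) x = k * coef f x + coef g x.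
Proof. by rewrite /coef; case: insub => [w|]; rewrite ?ffunE ?mulr0 ?addr0. Qed.

Definition word_of n (x : seq letter) : W n := insubd (nseq_tuple n ord0) x.

Lemma word_ofK n x : size x = n -> word_of n x = x :> seq letter.
Proof. by move=> h; rewrite /word_of insubdK //; apply/eqP. Qed.

Lemma coef_seq n (f : F n) x : size x = n -> coef f x = f (word_of n x).
Proof. by move=> h; rewrite -[in LHS](word_ofK h) coef_word. Qed.

Lemma coef_idealGen n nu i (c : W n) x : size x = n ->
  coef (gen nu i c) x =
  if (take i x == take i c) && (drop (i + 3) x == drop (i + 3) c)
  then rel nu (take 3 (drop i x)) else 0.
Proof. by move=> h; rewrite coef_seq // ffunE !word_ofK. Qed.

Definition monomial n (u : W n) : F n := [ffun w => (w == u)%:R].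

Lemma coef_monomial n (u : W n) x :
  size x = n -> coef (monomial u) x = (x == u)%:R.
Proof. by move=> h; rewrite coef_seq // ffunE -val_eqE /= word_ofK. Qed.

Definition rmul_letter n (a : letter) (f : F n) : F n.+1 :=
  [ffun w : W n.+1 => if drop n w == [:: a] then coef f (take n w) else 0].

Definition rmul_rel n (nu : letter) (f : F n) : F n.+3 :=
  [ffun w : W n.+3 => coef f (take n w) * rel nu (drop n w)].

Fact rmul_letter_is_linear n a : linear (@rmul_letter n a).
Proof.
move=> k f g; apply/ffunP => w; rewrite !ffunE coefZD.
by case: ifP => _; rewrite ?scaler0 ?addr0.
Qed.

HB.instance Definition _ n a :=
  GRing.isLinear.Build C (F n) (F n.+1) _ (@rmul_letter n a)
    (@rmul_letter_is_linear n a).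

Fact rmul_rel_is_linear n nu : linear (@rmul_rel n nu).
Proof.
by move=> k f g; apply/ffunP => w; rewrite !ffunE coefZD mulrDl -mulrA.
Qed.

HB.instance Definition _ n nu :=
  GRing.isLinear.Build C (F n) (F n.+3) _ (@rmul_rel n nu)
    (@rmul_rel_is_linear n nu).

Lemma idealGen_rmul_letter n nu i (c : W n.+3) : (i < n)%N ->
  gen nu i c =
  rmul_letter (nth ord0 c n.+2) (gen nu i (word_of n.+2 (take n.+2 c))).
Proof.
move=> lt_in; apply/ffunP => w; rewrite !ffunE.
have sw := size_tuple w; have sc := size_tuple c.
have stw : size (take n.+2 w) = n.+2 by rewrite size_takel // sw; lia.
have stc : size (take n.+2 c) = n.+2 by rewrite size_takel // sc; lia.
rewrite coef_idealGen // word_ofK //.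
rewrite !take_takel ?take_drop_take; try lia.
rewrite (drop_take_cat w (_ : i + 3 <= n.+2)%N); last lia.
rewrite (drop_take_cat c (_ : i + 3 <= n.+2)%N); last lia.
rewrite (drop_nth ord0 (_ : n.+2 < size c)%N) ?sc //.
rewrite [drop n.+3 c]drop_oversize ?sc // eqseq_cat; last first.
  by rewrite !size_drop stw stc.
by case: (take i w == _); case: (drop _ (take _ w) == _); case: (drop _ w == _).
Qed.

Lemma idealGen_rmul_rel n nu (c : W n.+3) :
  gen nu n c = rmul_rel nu (monomial (word_of n (take n c))).
Proof.
apply/ffunP => w; rewrite !ffunE.
have sw := size_tuple w; have sc := size_tuple c.
have stw : size (take n w) = n by rewrite size_takel // sw; lia.
have stc : size (take n c) = n by rewrite size_takel // sc; lia.
rewrite coef_monomial // word_ofK //.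
rewrite [drop (n + 3) w]drop_oversize ?sw ?addn3 //.
rewrite [drop n.+3 c]drop_oversize ?sc // eqxx andbT.
rewrite [take 3 _]take_oversize; last by rewrite size_drop sw; lia.
by case: (take n w == _); rewrite ?mul1r ?mul0r.
Qed.

Lemma rmul_rel_idealGen n nu nu' i (c : W n) : (i + 3 <= n)%N ->
  rmul_rel nu (gen nu' i c) =
  \sum_(t : W 3) rel nu t *: gen nu' i (word_of n.+3 (c ++ t)).
Proof.
move=> hi; apply/ffunP => w; rewrite !ffunE sum_ffunE.
have sw := size_tuple w; have sc := size_tuple c.
have stw : size (take n w) = n by rewrite size_takel // sw; lia.
rewrite coef_idealGen // take_takel ?take_drop_take //; try lia.
pose t0 : W 3 := word_of 3 (drop n w).
have t0E : tval t0 = drop n w by rewrite word_ofK // size_drop sw; lia.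
under eq_bigr => t _.
  rewrite !ffunE !word_ofK; last by rewrite size_cat sc size_tuple addn3.
  rewrite takel_cat ?sc; last lia.
  rewrite drop_cat_leq ?sc // (drop_take_cat w hi) eqseq_cat; last first.
    by rewrite !size_drop stw sc.
  rewrite -t0E (inj_eq val_inj).
  over.
rewrite (bigD1 t0) //= eqxx andbT big1 ?addr0; last first.
  by move=> t; rewrite eq_sym => /negbTE ->; rewrite !andbF scaler0.
by rewrite t0E mulrC.
Qed.

Definition letter_part n : {vspace F n.+3} :=
  (\sum_(a < s.+1) (linfun (@rmul_letter n.+2 a) @: I n.+2))%VS.

Definition rel_part n : {vspace F n.+3} :=
  (\sum_(nu < s.+1) (linfun (@rmul_rel n nu) @: (I n)^C))%VS.

Lemma idealGen_in n nu i (c : W n) : (i < n.-2)%N -> gen nu i c \in I n.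
Proof.
move=> hi; rewrite memvE; apply: (sumv_sup nu) => //.
by apply: (sumv_sup (Ordinal hi)) => //; apply: (sumv_sup c).
Qed.

Lemma idealGen_in_letter_part n nu i (c : W n.+3) : (i < n)%N ->
  gen nu i c \in letter_part n.
Proof.
move=> hi; rewrite idealGen_rmul_letter // -(lfunE (@rmul_letter n.+2 _)).
apply/(subvP (sumv_sup (nth ord0 c n.+2) _ (subvv _))) => //.
by apply: memv_img; apply: idealGen_in.
Qed.

Lemma rmul_rel_ideal_sub n nu :
  (linfun (@rmul_rel n nu) @: I n <= letter_part n)%VS.
Proof.
rewrite limg_sum; apply/subv_sumP => nu' _.
rewrite limg_sum; apply/subv_sumP => i _.
rewrite limg_sum; apply/subv_sumP => c _.
have lt_i := ltn_ord i.
rewrite limg_line -memvE lfunE /= rmul_rel_idealGen; last lia.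
by apply: memv_suml => t _; apply/memvZ/idealGen_in_letter_part; lia.
Qed.

Lemma idealDeg_sub n : (I n.+3 <= letter_part n + rel_part n)%VS.
Proof.
apply/subv_sumP => nu _; rewrite big_ord_recr subv_add /=; apply/andP; split.
  apply/subv_sumP => i _; apply/subv_sumP => c _.
  by rewrite -memvE; apply/(subvP (addvSl _ _))/idealGen_in_letter_part.
apply/subv_sumP => c _; rewrite -memvE idealGen_rmul_rel.
have : monomial (word_of n (take n c)) \in (I n + (I n)^C)%VS.
  by rewrite addv_complf memvf.
case/memv_addP => x xI [y yC ->].
rewrite -(lfunE (@rmul_rel n nu)) linearD /=; apply: memvD.
  by apply/(subvP (addvSl _ _))/(subvP (rmul_rel_ideal_sub n nu))/memv_img.
apply/(subvP (addvSr _ _))/(subvP (sumv_sup nu _ (subvv _))) => //.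
exact: memv_img.
Qed.

Lemma dim_freeDeg n : \dim {: F n} = (s.+1 ^ n)%N.
Proof. by rewrite dimvf /dim /= card_tuple card_ord muln1. Qed.

Lemma dimAE n : dimA ginv n = (s.+1 ^ n - \dim (I n))%N.
Proof. by rewrite /dimA dim_freeDeg. Qed.

Lemma dim_idealDeg_rec n :
  (\dim (I n.+3) <= s.+1 * \dim (I n.+2) + s.+1 * dimA ginv n)%N.
Proof.
apply: leq_trans (dimvS (idealDeg_sub n)) _.
apply: leq_trans (dimv_add_leqif _ _) _; apply: leq_add.
  by apply: leq_trans (dimv_sum_limg_leq _ _) _; rewrite card_ord.
apply: leq_trans (dimv_sum_limg_leq _ _) _.
by rewrite card_ord dimv_compl dim_freeDeg dimAE.
Qed.

Lemma dimA_rec n :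
  (s.+1 * dimA ginv n.+2 <= dimA ginv n.+3 + s.+1 * dimA ginv n)%N.
Proof.
have := dim_idealDeg_rec n; rewrite !dimAE.
have := dimvS (subvf (I n.+3)); have := dimvS (subvf (I n.+2)).
rewrite !dim_freeDeg [(s.+1 ^ n.+3)%N]expnS; nia.
Qed.

Lemma dimA_small n : (n < 3)%N -> dimA ginv n = (s.+1 ^ n)%N.
Proof.
rewrite dimAE; case: n => [|[|[|n]]] // _;
  by rewrite /idealDeg big1 ?dimv0 ?subn0 // => nu _; rewrite big_ord0.
Qed.

End IdealRecurrence.

Theorem mainTheorem5 (R : realType) (s : nat) (hs : (2 <= s)%N)
    (g : 'M[R]_s.+1) (gsym : g^T = g) (ginv_ok : g \in unitmx) :
  exists r : R, 1 < r /\
    exists N : nat, forall n : nat, (N <= n)%N ->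
      r ^+ n <= (dimA (invmx g) n)%:R.
Proof.
have [dimA0 dimA1 dimA2] : [/\ dimA (invmx g) 0 = 1%N,
    dimA (invmx g) 1 = s.+1 & dimA (invmx g) 2 = (s.+1 * s.+1)%N].
  by rewrite !dimA_small.
exists 2; split; first by rewrite ltr1n.
exists 0%N => n _; rewrite -natrX ler_nat.
have := expn2_cubic_rec _ _ _ (@dimA_rec R s (invmx g)) n.
by rewrite dimA0 dimA1 dimA2 !muln1; apply; nia.
Qed.
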